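(* Let $\Lambda$ be an infinite index set. Then the Banach space $l_1(\Lambda)$ is not topologically projective in $\mathbf{Nor}$ (and hence not extremely projective in $\mathbf{Nor}$).
   Context: An operator $\tau:F\to E$ is coisometric if $\|\tau\|\le1$ and for each $x\in E$, $\varepsilon>0$ there is $y\in F$ with $\tau(y)=x$, $\|y\|<\|x\|+\varepsilon$. A normed space $P$ is topologically projective in $\mathbf{Nor}$ if for every coisometric operator $\tau:F\to E$ between (not necessarily complete) normed spaces and every bounded $\varphi:P\to E$ there is a bounded $\psi:P\to F$ with $\tau\psi=\varphi$; it is extremely projective in $\mathbf{Nor}$ if moreover for each $\varepsilon>0$ such $\psi$ can be chosen with $\|\psi\|<\|\varphi\|+\varepsilon$. *)

From Stdlib Require Import Reals Lra List FunctionalExtensionality ProofIrrelevance.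
Open Scope R_scope.

Record NormedSpace : Type := {
  ns_car :> Type;
  ns_zero : ns_car;
  ns_add : ns_car -> ns_car -> ns_car;
  ns_opp : ns_car -> ns_car;
  ns_scal : R -> ns_car -> ns_car;
  ns_norm : ns_car -> R;
  ns_add_assoc : forall x y z, ns_add x (ns_add y z) = ns_add (ns_add x y) z;
  ns_add_comm : forall x y, ns_add x y = ns_add y x;
  ns_add_0 : forall x, ns_add x ns_zero = x;
  ns_add_opp : forall x, ns_add x (ns_opp x) = ns_zero;
  ns_scal_assoc : forall a b x, ns_scal a (ns_scal b x) = ns_scal (a * b) x;
  ns_scal_1 : forall x, ns_scal 1 x = x;
  ns_scal_distr_l : forall a x y, ns_scal a (ns_add x y) = ns_add (ns_scal a x) (ns_scal a y);
  ns_scal_distr_r : forall a b x, ns_scal (a + b) x = ns_add (ns_scal a x) (ns_scal b x);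
  ns_norm_eq0 : forall x, ns_norm x = 0 -> x = ns_zero;
  ns_norm_scal : forall a x, ns_norm (ns_scal a x) = Rabs a * ns_norm x;
  ns_norm_triangle : forall x y, ns_norm (ns_add x y) <= ns_norm x + ns_norm y
}.

Arguments ns_zero {_}.
Arguments ns_add {_} _ _.
Arguments ns_opp {_} _.
Arguments ns_scal {_} _ _.
Arguments ns_norm {_} _.

Definition is_linear {E F : NormedSpace} (f : E -> F) : Prop :=
  (forall x y, f (ns_add x y) = ns_add (f x) (f y)) /\
  (forall a x, f (ns_scal a x) = ns_scal a (f x)).

Definition is_bounded {E F : NormedSpace} (f : E -> F) : Prop :=
  exists C, forall x, ns_norm (f x) <= C * ns_norm x.

Definition op_norm_is {E F : NormedSpace} (f : E -> F) (M : R) : Prop :=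
  is_lub (fun r => exists x, ns_norm x <= 1 /\ r = ns_norm (f x)) M.

Definition coisometric {F E : NormedSpace} (tau : F -> E) : Prop :=
  is_linear tau /\
  (forall y, ns_norm (tau y) <= ns_norm y) /\
  (forall x eps, 0 < eps -> exists y, tau y = x /\ ns_norm y < ns_norm x + eps).

Definition topologically_projective (P : NormedSpace) : Prop :=
  forall (F E : NormedSpace) (tau : F -> E), coisometric tau ->
  forall phi : P -> E, is_linear phi -> is_bounded phi ->
  exists psi : P -> F, is_linear psi /\ is_bounded psi /\
    (forall x, tau (psi x) = phi x).

Definition extremely_projective (P : NormedSpace) : Prop :=
  forall (F E : NormedSpace) (tau : F -> E), coisometric tau ->
  forall phi : P -> E, is_linear phi -> is_bounded phi ->
  forall eps, 0 < eps ->
  exists psi : P -> F, is_linear psi /\ is_bounded psi /\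
    (forall x, tau (psi x) = phi x) /\
    exists a b, op_norm_is psi a /\ op_norm_is phi b /\ a < b + eps.

Definition infinite_type (L : Type) : Prop :=
  ~ exists l : list L, forall x : L, In x l.

Section L1.
Variable L : Type.

Fixpoint lsum (f : L -> R) (l : list L) : R :=
  match l with nil => 0 | x :: l' => Rabs (f x) + lsum f l' end.

Definition summable (f : L -> R) : Prop :=
  exists M, forall l, NoDup l -> lsum f l <= M.

Definition l1car := { f : L -> R | summable f }.

Lemma lsum_nonneg f l : 0 <= lsum f l.
Proof. induction l; simpl; [lra|]. pose proof (Rabs_pos (f a)); lra. Qed.

Lemma lsum_add f g l :
  lsum (fun x => f x + g x) l <= lsum f l + lsum g l.
Proof. induction l; simpl; [lra|]. pose proof (Rabs_triang (f a) (g a)); lra. Qed.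

Lemma lsum_scal a f l : lsum (fun x => a * f x) l = Rabs a * lsum f l.
Proof. induction l; simpl; [ring|]. rewrite IHl, Rabs_mult. ring. Qed.

Lemma lsum_zero l : lsum (fun _ => 0) l = 0.
Proof. induction l; simpl; [reflexivity|]. rewrite IHl, Rabs_R0. ring. Qed.

Lemma summable_zero : summable (fun _ => 0).
Proof. exists 0. intros l _. rewrite lsum_zero. lra. Qed.

Lemma summable_add f g : summable f -> summable g -> summable (fun x => f x + g x).
Proof.
  intros [M HM] [N HN]. exists (M + N). intros l Hl.
  pose proof (lsum_add f g l). pose proof (HM l Hl). pose proof (HN l Hl). lra.
Qed.

Lemma summable_scal a f : summable f -> summable (fun x => a * f x).
Proof.
  intros [M HM]. exists (Rabs a * M). intros l Hl. rewrite lsum_scal.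
  apply Rmult_le_compat_l; [apply Rabs_pos | auto].
Qed.

Definition l1_zero : l1car := exist _ _ summable_zero.
Definition l1_add (f g : l1car) : l1car :=
  exist _ _ (summable_add _ _ (proj2_sig f) (proj2_sig g)).
Definition l1_scal (a : R) (f : l1car) : l1car :=
  exist _ _ (summable_scal a _ (proj2_sig f)).
Definition l1_opp (f : l1car) : l1car := l1_scal (-1) f.

Definition l1set (f : L -> R) (r : R) : Prop :=
  exists l, NoDup l /\ r = lsum f l.

Lemma l1set_bound (f : l1car) : bound (l1set (proj1_sig f)).
Proof.
  destruct f as [f [M HM]]. exists M. intros r [l [Hl ->]]. simpl. auto.
Qed.

Lemma l1set_ne (f : l1car) : exists r, l1set (proj1_sig f) r.
Proof. exists 0. exists nil. split; [constructor | reflexivity]. Qed.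

Definition l1_norm (f : l1car) : R :=
  proj1_sig (completeness _ (l1set_bound f) (l1set_ne f)).

Lemma l1_norm_lub f : is_lub (l1set (proj1_sig f)) (l1_norm f).
Proof. unfold l1_norm. destruct completeness; auto. Qed.

Lemma l1_norm_ub f l : NoDup l -> lsum (proj1_sig f) l <= l1_norm f.
Proof. intros Hl. apply (proj1 (l1_norm_lub f)). exists l; auto. Qed.

Lemma l1_norm_least f M :
  (forall l, NoDup l -> lsum (proj1_sig f) l <= M) -> l1_norm f <= M.
Proof. intros H. apply (proj2 (l1_norm_lub f)). intros r [l [Hl ->]]. auto. Qed.

Lemma l1_ext (f g : l1car) : (forall x, proj1_sig f x = proj1_sig g x) -> f = g.
Proof.
  destruct f as [f Hf], g as [g Hg]; simpl; intros H.
  assert (f = g) by (apply functional_extensionality; auto). subst.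
  f_equal. apply proof_irrelevance.
Qed.

Lemma l1_norm_scal_le a f : l1_norm (l1_scal a f) <= Rabs a * l1_norm f.
Proof.
  apply l1_norm_least. intros l Hl. simpl. rewrite lsum_scal.
  apply Rmult_le_compat_l; [apply Rabs_pos | apply l1_norm_ub; auto].
Qed.

Lemma l1_norm_nonneg f : 0 <= l1_norm f.
Proof.
  pose proof (l1_norm_ub f nil (NoDup_nil _)). simpl in H. lra.
Qed.

Lemma l1_norm_scal a f : l1_norm (l1_scal a f) = Rabs a * l1_norm f.
Proof.
  apply Rle_antisym; [apply l1_norm_scal_le|].
  destruct (Req_dec a 0) as [->|Ha].
  - rewrite Rabs_R0, Rmult_0_l. apply l1_norm_nonneg.
  - assert (E : f = l1_scal (/ a) (l1_scal a f)).
    { apply l1_ext. intros x. simpl. field. auto. }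
    pose proof (l1_norm_scal_le (/ a) (l1_scal a f)) as H.
    rewrite <- E in H. rewrite Rabs_inv in H.
    pose proof (Rabs_pos_lt a Ha).
    apply (Rmult_le_compat_l (Rabs a)) in H; [|lra].
    rewrite <- Rmult_assoc, Rinv_r, Rmult_1_l in H; lra.
Qed.

Lemma l1_norm_eq0 f : l1_norm f = 0 -> f = l1_zero.
Proof.
  intros H. apply l1_ext. intros x. simpl.
  pose proof (l1_norm_ub f (x :: nil)) as Hx.
  assert (NoDup (x :: nil)) by (constructor; [simpl; tauto | constructor]).
  specialize (Hx H0). simpl in Hx. rewrite H in Hx.
  pose proof (Rabs_pos (proj1_sig f x)).
  destruct (Req_dec (proj1_sig f x) 0); auto.
  pose proof (Rabs_pos_lt _ H2). lra.
Qed.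

Lemma l1_norm_triangle f g : l1_norm (l1_add f g) <= l1_norm f + l1_norm g.
Proof.
  apply l1_norm_least. intros l Hl. simpl.
  pose proof (lsum_add (proj1_sig f) (proj1_sig g) l).
  pose proof (l1_norm_ub f l Hl). pose proof (l1_norm_ub g l Hl). lra.
Qed.

Definition l1 : NormedSpace.
Proof.
  refine {| ns_car := l1car; ns_zero := l1_zero; ns_add := l1_add;
            ns_opp := l1_opp; ns_scal := l1_scal; ns_norm := l1_norm;
            ns_norm_eq0 := l1_norm_eq0; ns_norm_scal := l1_norm_scal;
            ns_norm_triangle := l1_norm_triangle |};
  intros; apply l1_ext; intros; simpl; ring.
Defined.

End L1.

From Stdlib Require Import Reals Lra Lia List Classical ClassicalEpsilon
  FunctionalExtensionality ProofIrrelevance.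
Open Scope R_scope.

(** Take E = l_1(Λ) and let [Free E] be the l_1-space of finitely supported
    coefficient families on E \ {0}, mapped onto E by
    [evaluation : w ↦ Σ_y w(y) · y/‖y‖]; this map is coisometric.  If
    l_1(Λ) were topologically projective, the identity of l_1(Λ) would lift
    to a bounded linear [psi : l_1(Λ) -> Free E], so every x would come with
    a finite family of coefficients [W x] depending linearly and boundedly
    on x and recombining to x.

    Since finitely many functions cannot span the infinitely many unit
    vectors e_λ, for every finite set S of E some W(e_λ) is nonzero outside
    S.  Choosing such λ_n, y_n inductively and weights a_n decreasing fast
    enough, the vector x = Σ_n a_n e_{λ_n} satisfies W(x)(y_n) ≠ 0 for all n
    with the y_n pairwise distinct, contradicting the finiteness of the
    support of W(x).  Extreme projectivity implies topological projectivity,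
    which gives the second half of the theorem. *)

Arguments lsum {L} f l.
Arguments l1car L : clear implicits.
Arguments l1_add {L} f g.
Arguments l1_scal {L} a f.
Arguments l1_zero {L}.
Arguments l1_norm {L} f.
Arguments l1_ext {L} f g.
Arguments l1_norm_ub {L} f l.
Arguments l1_norm_least {L} f M.

Section NormedSpaceFacts.
Variable E : NormedSpace.

Lemma ns_scal_0 (x : E) : ns_scal 0 x = ns_zero.
Proof.
  assert (Hdouble : ns_add (ns_scal 0 x) (ns_scal 0 x) = ns_scal 0 x).
  { rewrite <- ns_scal_distr_r, Rplus_0_r. reflexivity. }
  transitivity (ns_add (ns_add (ns_scal 0 x) (ns_scal 0 x)) (ns_opp (ns_scal 0 x))).
  - rewrite <- ns_add_assoc, ns_add_opp, ns_add_0. reflexivity.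
  - rewrite Hdouble, ns_add_opp. reflexivity.
Qed.

Lemma ns_add_0_l (x : E) : ns_add ns_zero x = x.
Proof. rewrite ns_add_comm. apply ns_add_0. Qed.

Lemma ns_add_scal_opp (x : E) : ns_add x (ns_scal (-1) x) = ns_zero.
Proof.
  rewrite <- (ns_scal_1 _ x) at 1.
  rewrite <- ns_scal_distr_r, Rplus_opp_r. apply ns_scal_0.
Qed.

Lemma ns_norm_zero : ns_norm (@ns_zero E) = 0.
Proof. rewrite <- (ns_scal_0 ns_zero), ns_norm_scal, Rabs_R0. ring. Qed.

Lemma ns_norm_nonneg (x : E) : 0 <= ns_norm x.
Proof.
  pose proof (ns_norm_triangle _ x (ns_scal (-1) x)) as Htri.
  rewrite ns_add_scal_opp, ns_norm_zero, ns_norm_scal in Htri.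
  replace (Rabs (-1)) with 1 in Htri by (rewrite Rabs_left; lra).
  lra.
Qed.

Lemma ns_norm_pos (x : E) : x <> ns_zero -> 0 < ns_norm x.
Proof.
  intros Hx. destruct (ns_norm_nonneg x) as [Hpos | Hzero]; auto.
  symmetry in Hzero. apply ns_norm_eq0 in Hzero. contradiction.
Qed.

End NormedSpaceFacts.

Definition kronecker {T : Type} (y z : T) : R :=
  if excluded_middle_informative (y = z) then 1 else 0.

Lemma kronecker_same {T} (y : T) : kronecker y y = 1.
Proof. unfold kronecker. destruct excluded_middle_informative; congruence. Qed.

Lemma kronecker_diff {T} (y z : T) : y <> z -> kronecker y z = 0.
Proof. intros H. unfold kronecker. destruct excluded_middle_informative; congruence. Qed.

Lemma lsum_ext {T} (f g : T -> R) l :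
  (forall z, In z l -> f z = g z) -> lsum f l = lsum g l.
Proof. induction l; simpl; intros H; [reflexivity|]. rewrite H, IHl; auto. Qed.

Lemma lsum_kronecker {T} (y : T) c l :
  NoDup l -> lsum (fun z => c * kronecker y z) l <= Rabs c.
Proof.
  induction l as [|a l IH]; simpl; intros Hnodup.
  - apply Rabs_pos.
  - inversion Hnodup as [|? ? Hnotin Hnodup']; subst.
    destruct (classic (y = a)) as [<- | Hya].
    + rewrite kronecker_same, Rmult_1_r.
      rewrite (lsum_ext _ (fun _ => 0)), lsum_zero; [lra|].
      intros z Hz. rewrite kronecker_diff; [ring|]. intros ->; contradiction.
    + rewrite kronecker_diff, Rmult_0_r, Rabs_R0 by auto. specialize (IH Hnodup'). lra.
Qed.

Lemma l1_norm_zero {L} : l1_norm (@l1_zero L) = 0.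
Proof.
  apply Rle_antisym; [|apply l1_norm_nonneg].
  apply l1_norm_least. intros l _. simpl. rewrite lsum_zero. lra.
Qed.

Lemma summable_point {T} (y : T) c : summable T (fun z => c * kronecker y z).
Proof. exists (Rabs c). intros l Hl. apply lsum_kronecker; auto. Qed.

Definition l1_point {T} (y : T) (c : R) : l1car T := exist _ _ (summable_point y c).

Lemma l1_point_norm {T} (y : T) c : l1_norm (l1_point y c) <= Rabs c.
Proof. apply l1_norm_least. intros l Hl. apply lsum_kronecker; auto. Qed.

Lemma l1_coord_bound {T} (f : l1car T) z : Rabs (proj1_sig f z) <= l1_norm f.
Proof.
  pose proof (l1_norm_ub f (z :: nil)) as Hub.
  assert (Hnodup : NoDup (z :: nil)) by (constructor; [simpl; tauto | constructor]).
  specialize (Hub Hnodup). simpl in Hub. lra.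
Qed.

(** * The free l_1-space over a normed space and its coisometric evaluation map *)
Section FreeSpace.
Variable E : NormedSpace.

(** [represents w x]: [w] is a finitely supported family of coefficients on
    E \ {0} and [x = Σ_y w(y) · y/‖y‖]; built up one point mass at a time. *)
Inductive represents : (E -> R) -> E -> Prop :=
| represents_zero : represents (fun _ => 0) ns_zero
| represents_step : forall w x y c, represents w x -> y <> ns_zero ->
    represents (fun z => w z + c * kronecker y z) (ns_add x (ns_scal (c / ns_norm y) y)).

Lemma represents_ext w x w' : represents w x -> (forall z, w z = w' z) -> represents w' x.
Proof.
  intros H Hw. replace w' with w; auto. apply functional_extensionality; auto.
Qed.

Lemma represents_add w1 x1 w2 x2 : represents w1 x1 -> represents w2 x2 ->
  represents (fun z => w1 z + w2 z) (ns_add x1 x2).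
Proof.
  intros H1 H2. induction H2 as [|w x y c H2 IH Hy].
  - rewrite ns_add_0. apply (represents_ext _ _ _ H1). intros; ring.
  - rewrite ns_add_assoc.
    apply (represents_ext _ _ _ (represents_step _ _ y c IH Hy)). intros; ring.
Qed.

Lemma represents_scal a w x : represents w x -> represents (fun z => a * w z) (ns_scal a x).
Proof.
  intros H. induction H as [|w x y c H IH Hy].
  - rewrite <- (ns_scal_0 _ ns_zero), ns_scal_assoc, Rmult_0_r, ns_scal_0.
    apply (represents_ext _ _ _ represents_zero). intros; ring.
  - rewrite ns_scal_distr_l, ns_scal_assoc.
    replace (a * (c / ns_norm y)) with (a * c / ns_norm y) by (unfold Rdiv; ring).
    apply (represents_ext _ _ _ (represents_step _ _ y (a * c) IH Hy)). intros; ring.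
Qed.

Fixpoint combination (w : E -> R) (l : list E) : E :=
  match l with
  | nil => ns_zero
  | y :: l' => ns_add (ns_scal (w y / ns_norm y) y) (combination w l')
  end.

Lemma combination_notin w y c l : ~ In y l ->
  combination (fun t => w t + c * kronecker y t) l = combination w l.
Proof.
  induction l as [|a l IH]; simpl; intros Hy; [reflexivity|].
  rewrite IH by tauto. rewrite (kronecker_diff y a) by (intros ->; tauto).
  rewrite Rmult_0_r, Rplus_0_r. reflexivity.
Qed.

Lemma combination_in w y c l : NoDup l -> In y l ->
  combination (fun t => w t + c * kronecker y t) l =
  ns_add (combination w l) (ns_scal (c / ns_norm y) y).
Proof.
  induction l as [|a l IH]; simpl; intros Hnodup Hy; [contradiction|].
  inversion Hnodup as [|? ? Hnotin Hnodup']; subst.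
  destruct Hy as [-> | Hy].
  - rewrite combination_notin, kronecker_same, Rmult_1_r by auto.
    replace ((w y + c) / ns_norm y) with (w y / ns_norm y + c / ns_norm y)
      by (unfold Rdiv; ring).
    rewrite ns_scal_distr_r, <- !ns_add_assoc, (ns_add_comm _ (ns_scal (c / ns_norm y) y)).
    reflexivity.
  - rewrite IH, kronecker_diff, Rmult_0_r, Rplus_0_r, ns_add_assoc
      by (auto; intros ->; contradiction).
    reflexivity.
Qed.

Lemma combination_zero l : combination (fun _ => 0) l = ns_zero.
Proof.
  induction l as [|y l IH]; simpl; [reflexivity|].
  rewrite IH, ns_add_0. unfold Rdiv. rewrite Rmult_0_l. apply ns_scal_0.
Qed.

Lemma represents_combination w x : represents w x ->
  exists l, NoDup l /\ (forall y, In y l -> y <> ns_zero) /\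
    (forall y, w y <> 0 -> In y l) /\ x = combination w l.
Proof.
  intros H. induction H as [|w x y c H IH Hy].
  - exists nil. repeat split; auto; [constructor | intros y Hy; lra].
  - destruct IH as [l [Hnodup [Hnonzero [Hsupp ->]]]].
    assert (Hsupp' : forall t, w t + c * kronecker y t <> 0 -> y = t \/ In t l).
    { intros t Ht. destruct (classic (y = t)) as [<- | Hyt]; auto.
      right. apply Hsupp. rewrite kronecker_diff in Ht by auto. lra. }
    destruct (classic (In y l)) as [Hin | Hnotin].
    + exists l. repeat split; auto.
      * intros t Ht. destruct (Hsupp' t Ht) as [<- |]; auto.
      * symmetry. apply combination_in; auto.
    + exists (y :: l). repeat split; auto.
      * constructor; auto.
      * intros t [<- | Ht]; auto.
      * simpl. rewrite combination_notin, kronecker_same by auto.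
        assert (Hwy : w y = 0) by (apply NNPP; intros Hwy; apply Hnotin; auto).
        rewrite Hwy, Rmult_1_r, Rplus_0_l. apply ns_add_comm.
Qed.

Lemma combination_norm w l : (forall y, In y l -> y <> ns_zero) ->
  ns_norm (combination w l) <= lsum w l.
Proof.
  induction l as [|y l IH]; simpl; intros Hnonzero.
  - rewrite ns_norm_zero. lra.
  - eapply Rle_trans; [apply ns_norm_triangle|].
    rewrite ns_norm_scal.
    pose proof (ns_norm_pos _ y (Hnonzero y (or_introl eq_refl))) as Hpos.
    unfold Rdiv. rewrite Rabs_mult, Rabs_inv, (Rabs_right (ns_norm y)) by lra.
    replace (Rabs (w y) * / ns_norm y * ns_norm y) with (Rabs (w y)) by (field; lra).
    specialize (IH (fun t Ht => Hnonzero t (or_intror Ht))). lra.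
Qed.

Definition free_car := { p : l1car E * E | represents (proj1_sig (fst p)) (snd p) }.

Definition coeffs (p : free_car) : l1car E := fst (proj1_sig p).
Definition value (p : free_car) : E := snd (proj1_sig p).

Definition free_zero : free_car :=
  exist _ (l1_zero, ns_zero) represents_zero.
Definition free_add (p q : free_car) : free_car :=
  exist _ (l1_add (coeffs p) (coeffs q), ns_add (value p) (value q))
    (represents_add _ _ _ _ (proj2_sig p) (proj2_sig q)).
Definition free_scal (a : R) (p : free_car) : free_car :=
  exist _ (l1_scal a (coeffs p), ns_scal a (value p))
    (represents_scal a _ _ (proj2_sig p)).
Definition free_norm (p : free_car) : R := l1_norm (coeffs p).

Lemma free_ext (p q : free_car) : coeffs p = coeffs q -> value p = value q -> p = q.
Proof.
  destruct p as [[w x] H], q as [[w' x'] H']; unfold coeffs, value; simpl.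
  intros -> ->. f_equal. apply proof_irrelevance.
Qed.

Lemma free_norm_eq0 p : free_norm p = 0 -> p = free_zero.
Proof.
  intros Hnorm. apply l1_norm_eq0 in Hnorm.
  destruct (represents_combination _ _ (proj2_sig p)) as [l [_ [_ [_ Hvalue]]]].
  apply free_ext; auto. change (value p = ns_zero).
  unfold value. rewrite Hvalue. change (proj1_sig (fst (proj1_sig p))) with (proj1_sig (coeffs p)).
  rewrite Hnorm. apply combination_zero.
Qed.

Definition Free : NormedSpace.
Proof.
  refine {| ns_car := free_car; ns_zero := free_zero; ns_add := free_add;
            ns_opp := free_scal (-1); ns_scal := free_scal; ns_norm := free_norm;
            ns_norm_eq0 := free_norm_eq0 |}; intros.
  all: try (apply free_ext; [apply l1_ext; intros; simpl; ring | simpl]).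
  - apply ns_add_assoc.
  - apply ns_add_comm.
  - apply ns_add_0.
  - apply ns_add_scal_opp.
  - apply ns_scal_assoc.
  - apply ns_scal_1.
  - apply ns_scal_distr_l.
  - apply ns_scal_distr_r.
  - apply l1_norm_scal.
  - apply l1_norm_triangle.
Defined.

Definition evaluation (p : Free) : E := value p.

Lemma value_combination (p : Free) :
  exists l, (forall y, proj1_sig (coeffs p) y <> 0 -> In y l) /\
    value p = combination (proj1_sig (coeffs p)) l.
Proof.
  destruct (represents_combination _ _ (proj2_sig p)) as [l [_ [_ [Hsupp Hvalue]]]].
  exists l. auto.
Qed.

(** The evaluation map has norm at most 1 by [combination_norm], and every
    x ≠ 0 lifts to the single coefficient ‖x‖ at x, whose norm is ‖x‖. *)
Lemma evaluation_coisometric : coisometric evaluation.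
Proof.
  split; [split; intros; reflexivity|]. split.
  - intros [[w x] H]. simpl in H. unfold evaluation, value; simpl. change (ns_norm x <= l1_norm w).
    destruct (represents_combination _ _ H) as [l [Hnodup [Hnonzero [_ ->]]]].
    eapply Rle_trans; [apply combination_norm; auto|]. apply l1_norm_ub; auto.
  - intros x eps Heps. destruct (classic (x = ns_zero)) as [-> | Hx].
    + exists free_zero. split; [reflexivity|].
      change (l1_norm (@l1_zero E) < ns_norm (@ns_zero E) + eps).
      rewrite l1_norm_zero, ns_norm_zero. lra.
    + pose proof (ns_norm_pos _ x Hx) as Hpos.
      assert (Hrep : represents (proj1_sig (l1_point x (ns_norm x))) x).
      { pose proof (represents_step _ _ x (ns_norm x) represents_zero Hx) as Hstep.
        replace (ns_norm x / ns_norm x) with 1 in Hstep by (field; lra).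
        rewrite ns_scal_1, ns_add_0_l in Hstep.
        apply (represents_ext _ _ _ Hstep). intros; simpl; ring. }
      exists (exist _ (l1_point x (ns_norm x), x) Hrep). split; [reflexivity|].
      pose proof (l1_point_norm x (ns_norm x)) as Hnorm.
      rewrite Rabs_right in Hnorm by (apply Rle_ge, ns_norm_nonneg).
      change (l1_norm (l1_point x (ns_norm x)) < ns_norm x + eps). lra.
Qed.

End FreeSpace.

Arguments coeffs {E} p.
Arguments value {E} p.
Arguments evaluation {E} p.

(** * Finitely many functions cannot span infinitely many Kronecker deltas *)

Fixpoint in_span {T : Type} (S : list (T -> R)) (v : T -> R) : Prop :=
  match S with
  | nil => forall t, v t = 0
  | u :: S' => exists c s, in_span S' s /\ forall t, v t = c * u t + s t
  end.

Section Span.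
Variable T : Type.

Lemma in_span_ext (S : list (T -> R)) v v' :
  in_span S v -> (forall t, v t = v' t) -> in_span S v'.
Proof.
  destruct S; simpl; intros H Hext.
  - intros t. rewrite <- Hext; auto.
  - destruct H as [c [s [Hs Hv]]]. exists c, s. split; auto.
    intros t. rewrite <- Hext; auto.
Qed.

Lemma in_span_zero (S : list (T -> R)) v : (forall t, v t = 0) -> in_span S v.
Proof.
  induction S; simpl; intros H; auto.
  exists 0, v. split; auto. intros; ring.
Qed.

Lemma in_span_add (S : list (T -> R)) u v :
  in_span S u -> in_span S v -> in_span S (fun t => u t + v t).
Proof.
  revert u v. induction S; simpl; intros u v Hu Hv.
  - intros t. rewrite Hu, Hv. ring.
  - destruct Hu as [c [s [Hs Hu]]], Hv as [c' [s' [Hs' Hv]]].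
    exists (c + c'), (fun t => s t + s' t). split; auto.
    intros t. rewrite Hu, Hv. ring.
Qed.

Lemma in_span_scal (S : list (T -> R)) a v : in_span S v -> in_span S (fun t => a * v t).
Proof.
  revert v. induction S; simpl; intros v Hv.
  - intros t. rewrite Hv. ring.
  - destruct Hv as [c [s [Hs Hv]]]. exists (a * c), (fun t => a * s t). split; auto.
    intros t. rewrite Hv. ring.
Qed.

Lemma in_span_elem (S : list (T -> R)) u : In u S -> in_span S u.
Proof.
  induction S; simpl; intros H; [contradiction|]. destruct H as [<- | H].
  - exists 1, (fun _ => 0). split; [apply in_span_zero; auto|]. intros; ring.
  - exists 0, u. split; auto. intros; ring.
Qed.

(** Gaussian elimination step: subtract from [v] the multiple of the pivot
    [u] that kills the coordinate [t0]. *)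
Definition eliminate (u : T -> R) (t0 : T) (v : T -> R) : T -> R :=
  fun t => v t - v t0 / u t0 * u t.

Lemma in_span_eliminate u t0 (S : list (T -> R)) v :
  u t0 <> 0 -> in_span S v -> in_span (map (eliminate u t0) S) (eliminate u t0 v).
Proof.
  intros Hu. revert v. unfold eliminate.
  induction S as [|w S IH]; simpl; intros v Hv.
  - intros t. rewrite !Hv. unfold Rdiv. ring.
  - destruct Hv as [c [s [Hs Hv]]].
    exists c, (fun t => s t - s t0 / u t0 * u t). split; auto.
    intros t. rewrite !Hv. field. auto.
Qed.

(** By induction on the number of spanning functions, eliminating one
    coordinate at a time; the eliminated coordinates are collected in [K]. *)
Lemma deltas_outside_not_spanned (HT : infinite_type T) : forall n (S : list (T -> R)) K,
  length S = n -> ~ (forall z, ~ In z K -> in_span S (kronecker z)).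
Proof.
  induction n as [|n IH]; intros S K Hlen Hspan.
  - destruct S; [|discriminate]. simpl in Hspan.
    assert (Hfresh : exists z, ~ In z K).
    { apply NNPP; intros Hall. apply HT. exists K.
      intros x. apply NNPP; intros Hx. apply Hall; eauto. }
    destruct Hfresh as [z Hz].
    specialize (Hspan z Hz z). rewrite kronecker_same in Hspan. lra.
  - destruct S as [|u S]; [discriminate|]. injection Hlen as Hlen.
    destruct (classic (forall t, u t = 0)) as [Hu0 | Hu].
    + apply (IH S K Hlen). intros z Hz. destruct (Hspan z Hz) as [c [s [Hs Hv]]].
      apply (in_span_ext _ _ _ Hs). intros t. rewrite Hv, Hu0. ring.
    + apply not_all_ex_not in Hu. destruct Hu as [t0 Ht0].
      apply (IH (map (eliminate u t0) S) (t0 :: K)); [rewrite length_map; auto|].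
      intros z Hz.
      destruct (Hspan z (fun h => Hz (or_intror h))) as [c [s [Hs Hv]]].
      apply (in_span_ext _ _ _ (in_span_eliminate u t0 S s Ht0 Hs)).
      assert (Hc : c = - s t0 / u t0).
      { assert (Hzt0 : kronecker z t0 = 0) by (apply kronecker_diff; intros ->; apply Hz; left; auto).
        rewrite Hv in Hzt0. field_simplify_eq; auto. lra. }
      intros t. unfold eliminate. rewrite Hv, Hc. field. auto.
Qed.

Lemma deltas_not_finitely_spanned (HT : infinite_type T) (S : list (T -> R)) :
  ~ (forall z, in_span S (kronecker z)).
Proof.
  intros Hspan. apply (deltas_outside_not_spanned HT (length S) S nil eq_refl).
  intros z _. apply Hspan.
Qed.

End Span.

Lemma l1_combination_in_span {T} (w : l1car T -> R) (l S : list (l1car T)) :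
  (forall y, w y <> 0 -> In y S) ->
  in_span (map (@proj1_sig _ _) S) (proj1_sig (combination (l1 T) w l)).
Proof.
  intros HS. induction l as [|y l IH].
  - apply in_span_zero. intros t. reflexivity.
  - apply (in_span_ext _ _
      (fun t => w y / l1_norm y * proj1_sig y t + proj1_sig (combination (l1 T) w l) t));
      [|intros t; reflexivity].
    apply in_span_add; auto.
    destruct (classic (w y = 0)) as [Hzero | Hnonzero].
    + apply in_span_zero. intros t. rewrite Hzero. unfold Rdiv. ring.
    + apply in_span_scal, in_span_elem, in_map. auto.
Qed.

(** * No bounded linear lifting of the identity of l_1(Λ) through [Free] *)
Section NoBoundedLifting.
Variable L : Type.
Hypothesis L_infinite : infinite_type L.
Variable psi : l1 L -> Free (l1 L).
Hypothesis psi_linear : is_linear psi.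
Variable C : R.
Hypothesis C_pos : 0 < C.
Hypothesis psi_bounded : forall x, ns_norm (psi x) <= C * ns_norm x.
Hypothesis psi_lifts : forall x, evaluation (psi x) = x.

Notation E := (l1car L).

Definition W (x : E) (y : E) : R := proj1_sig (coeffs (psi x)) y.

Lemma W_add x x' y : W (l1_add x x') y = W x y + W x' y.
Proof.
  exact (f_equal (fun p : Free (l1 L) => proj1_sig (coeffs p) y) (proj1 psi_linear x x')).
Qed.

Lemma W_scal c x y : W (l1_scal c x) y = c * W x y.
Proof.
  exact (f_equal (fun p : Free (l1 L) => proj1_sig (coeffs p) y) (proj2 psi_linear c x)).
Qed.

Lemma W_bound x y : Rabs (W x y) <= C * l1_norm x.
Proof. eapply Rle_trans; [apply l1_coord_bound | apply psi_bounded]. Qed.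

Lemma W_span x (S : list E) : (forall y, W x y <> 0 -> In y S) ->
  in_span (map (@proj1_sig _ _) S) (proj1_sig x).
Proof.
  intros HS. destruct (value_combination _ (psi x)) as [l [_ Hvalue]].
  change (value (psi x)) with (evaluation (psi x)) in Hvalue.
  rewrite psi_lifts in Hvalue. rewrite Hvalue.
  apply l1_combination_in_span. exact HS.
Qed.

Lemma W_finite_support x : exists l, forall y, W x y <> 0 -> In y l.
Proof. destruct (value_combination _ (psi x)) as [l [Hsupp _]]. exists l. exact Hsupp. Qed.

Definition support (x : E) : list E :=
  proj1_sig (constructive_indefinite_description _ (W_finite_support x)).

Lemma support_spec x y : W x y <> 0 -> In y (support x).
Proof. unfold support. destruct constructive_indefinite_description; simpl; auto. Qed.

Definition unit_vector (z : L) : E := l1_point z 1.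

Lemma fresh_support (S : list E) : exists z y, W (unit_vector z) y <> 0 /\ ~ In y S.
Proof.
  apply NNPP; intros Hnone.
  apply (deltas_not_finitely_spanned _ L_infinite (map (@proj1_sig _ _) S)).
  intros z.
  assert (Hsupp : forall y, W (unit_vector z) y <> 0 -> In y S).
  { intros y Hy. apply NNPP; intros Hy'. apply Hnone. exists z, y; auto. }
  apply (in_span_ext _ _ _ _ (W_span (unit_vector z) S Hsupp)).
  intros t. simpl. ring.
Qed.

Definition pick (S : list E) :
  { zy : L * E | W (unit_vector (fst zy)) (snd zy) <> 0 /\ ~ In (snd zy) S }.
Proof.
  destruct (constructive_indefinite_description _ (fresh_support S)) as [z Hz].
  destruct (constructive_indefinite_description _ Hz) as [y Hy].
  exists (z, y). exact Hy.
Defined.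

(** The inductive construction: at each stage we have the partial sum
    Σ_{k<n} a_k e_{λ_k}, the next weight a_n and the points already hit by
    the lifts of the chosen unit vectors; λ_n, y_n are picked with y_n
    outside all of these. *)
Record stage : Type := Stage { partial : E; weight : R; used : list E }.

Definition choice (s : stage) : L * E := proj1_sig (pick (support (partial s) ++ used s)).

Definition gain (s : stage) : R := Rabs (W (unit_vector (fst (choice s))) (snd (choice s))).

Definition next (s : stage) : stage :=
  Stage (l1_add (partial s) (l1_scal (weight s) (unit_vector (fst (choice s)))))
        (Rmin (weight s / 2) (weight s * gain s / (4 * C)))
        (used s ++ support (unit_vector (fst (choice s)))).

Fixpoint stages (n : nat) : stage :=
  match n with O => Stage l1_zero 1 nil | S n => next (stages n) end.

Definition P n := partial (stages n).
Definition a n := weight (stages n).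
Definition lam n := fst (choice (stages n)).
Definition yy n := snd (choice (stages n)).
Definition m n := gain (stages n).

Lemma choice_spec n :
  W (unit_vector (lam n)) (yy n) <> 0 /\ ~ In (yy n) (support (P n) ++ used (stages n)).
Proof. exact (proj2_sig (pick _)). Qed.

Lemma m_pos n : 0 < m n.
Proof. apply Rabs_pos_lt, choice_spec. Qed.

Lemma a_pos n : 0 < a n.
Proof.
  induction n as [|n IH]; [change (0 < 1); lra|].
  change (0 < Rmin (a n / 2) (a n * m n / (4 * C))).
  pose proof (m_pos n). apply Rmin_glb_lt; [lra|].
  apply Rdiv_lt_0_compat; [apply Rmult_lt_0_compat|]; lra.
Qed.

Lemma a_half n : a (S n) <= a n / 2.
Proof. apply Rmin_l. Qed.

Lemma a_small n : a (S n) <= a n * m n / (4 * C).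
Proof. apply Rmin_r. Qed.

Lemma P_step n : P (S n) = l1_add (P n) (l1_scal (a n) (unit_vector (lam n))).
Proof. reflexivity. Qed.

Lemma W_P_yy n : W (P n) (yy n) = 0.
Proof.
  apply NNPP; intros Hnz. apply (proj2 (choice_spec n)).
  apply in_or_app. left. apply support_spec; auto.
Qed.

Lemma used_spec n k y : (k < n)%nat -> W (unit_vector (lam k)) y <> 0 -> In y (used (stages n)).
Proof.
  induction n as [|n IH]; intros Hk Hy; [lia|].
  simpl. apply in_or_app. destruct (Nat.eq_dec k n) as [-> | Hkn].
  - right. apply support_spec. exact Hy.
  - left. apply IH; auto. lia.
Qed.

Lemma lam_inj k n : lam k = lam n -> k = n.
Proof.
  assert (Hlt : forall k n, (k < n)%nat -> lam k <> lam n).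
  { intros k' n' Hlt Heq. apply (proj2 (choice_spec n')), in_or_app. right.
    apply (used_spec n' k'); auto. rewrite Heq. apply choice_spec. }
  intros Heq. destruct (Nat.lt_total k n) as [H | [H | H]]; auto.
  - exfalso. apply (Hlt k n H Heq).
  - exfalso. apply (Hlt n k H). auto.
Qed.

Lemma yy_inj k n : yy k = yy n -> k = n.
Proof.
  assert (Hlt : forall k n, (k < n)%nat -> yy k <> yy n).
  { intros k' n' Hlt Heq. apply (proj2 (choice_spec n')), in_or_app. right.
    apply (used_spec n' k'); auto. rewrite <- Heq. apply choice_spec. }
  intros Heq. destruct (Nat.lt_total k n) as [H | [H | H]]; auto.
  - exfalso. apply (Hlt k n H Heq).
  - exfalso. apply (Hlt n k H). auto.
Qed.

Definition tail (k : nat) (z : L) : R :=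
  match excluded_middle_informative (exists j, (k <= j)%nat /\ lam j = z) with
  | left H => a (proj1_sig (constructive_indefinite_description _ H))
  | right _ => 0
  end.

Lemma tail_val k j : (k <= j)%nat -> tail k (lam j) = a j.
Proof.
  intros Hj. unfold tail. destruct excluded_middle_informative as [H | H].
  - destruct (proj2_sig (constructive_indefinite_description _ H)) as [_ Hwitness].
    apply lam_inj in Hwitness. rewrite Hwitness. reflexivity.
  - exfalso. apply H. eauto.
Qed.

Lemma tail_zero k z : (forall j, (k <= j)%nat -> lam j <> z) -> tail k z = 0.
Proof.
  intros Hnone. unfold tail. destruct excluded_middle_informative as [[j [Hj Hz]] | _]; auto.
  exfalso. apply (Hnone j); auto.
Qed.

Lemma tail_step k z : tail k z = a k * kronecker (lam k) z + tail (S k) z.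
Proof.
  destruct (classic (lam k = z)) as [<- | Hz].
  - rewrite kronecker_same, tail_val, tail_zero by (auto; intros j Hj Heq; apply lam_inj in Heq; lia).
    ring.
  - rewrite kronecker_diff, Rmult_0_r, Rplus_0_l by auto.
    destruct (classic (exists j, (k <= j)%nat /\ lam j = z)) as [[j [Hj <-]] | Hnone].
    + assert (j <> k) by (intros ->; auto). rewrite !tail_val by lia. reflexivity.
    + rewrite !tail_zero; auto; intros j Hj Heq; apply Hnone; exists j; split; auto; lia.
Qed.

(** Finite blocks Σ_{k≤j<k+M} a_j e_{λ_j}, which agree with [tail k] on any
    finite set of points once M is large; their mass is at most
    2 a_k - 2 a_{k+M} by [a_half]. *)
Fixpoint block (k M : nat) (z : L) : R :=
  match M with
  | O => 0
  | S M' => block k M' z + a (k + M') * kronecker (lam (k + M')) z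
  end.

Lemma block_mass k M l : NoDup l -> lsum (block k M) l + 2 * a (k + M) <= 2 * a k.
Proof.
  intros Hnodup. induction M as [|M IH].
  - simpl. rewrite lsum_zero, Nat.add_0_r. lra.
  - eapply Rle_trans; [|apply IH].
    pose proof (lsum_add L (block k M) (fun z => a (k + M) * kronecker (lam (k + M)) z) l).
    pose proof (lsum_kronecker (lam (k + M)) (a (k + M)) l Hnodup) as Hpoint.
    rewrite Rabs_right in Hpoint by (left; apply a_pos).
    pose proof (a_half (k + M)). rewrite Nat.add_succ_r. simpl block. lra.
Qed.

Lemma block_zero k M z : (forall j, (k <= j < k + M)%nat -> lam j <> z) -> block k M z = 0.
Proof.
  induction M as [|M IH]; intros Hnone; simpl; auto.
  rewrite IH by (intros j Hj; apply Hnone; lia).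
  rewrite kronecker_diff by (apply Hnone; lia). ring.
Qed.

Lemma block_val k M j : (k <= j < k + M)%nat -> block k M (lam j) = a j.
Proof.
  induction M as [|M IH]; intros Hj; [lia|]. simpl.
  destruct (Nat.eq_dec j (k + M)) as [-> | Hne].
  - rewrite kronecker_same, block_zero; [ring|].
    intros j Hj' Heq. apply lam_inj in Heq. lia.
  - rewrite IH, kronecker_diff; [ring | | lia]. intros Heq. apply lam_inj in Heq. lia.
Qed.

Lemma tail_eventually_block k l :
  exists M0, forall M, (M0 <= M)%nat -> forall z, In z l -> tail k z = block k M z.
Proof.
  induction l as [|z l [M1 IH]].
  - exists O. intros M _ z [].
  - destruct (classic (exists j, (k <= j)%nat /\ lam j = z)) as [[j [Hj <-]] | Hnone].
    + exists (Nat.max M1 (S (j - k))). intros M HM t [<- | Ht].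
      * rewrite tail_val, block_val; auto; lia.
      * apply IH; auto; lia.
    + exists M1. intros M HM t [<- | Ht]; [|apply IH; auto].
      rewrite tail_zero, block_zero; auto.
      * intros j Hj Heq. apply Hnone. exists j. split; auto; lia.
      * intros j Hj Heq. apply Hnone. eauto.
Qed.

Lemma tail_mass k l : NoDup l -> lsum (tail k) l <= 2 * a k.
Proof.
  intros Hnodup. destruct (tail_eventually_block k l) as [M0 Hagree].
  rewrite (lsum_ext _ (block k M0)) by (apply Hagree; lia).
  pose proof (block_mass k M0 l Hnodup). pose proof (a_pos (k + M0)). lra.
Qed.

Lemma tail_summable k : summable L (tail k).
Proof. exists (2 * a k). intros l Hl. apply tail_mass; auto. Qed.

Definition tail_vec k : E := exist _ (tail k) (tail_summable k).

Lemma tail_vec_norm k : l1_norm (tail_vec k) <= 2 * a k.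
Proof. apply l1_norm_least. intros l Hl. apply tail_mass; auto. Qed.

Lemma tail_decomposition n : tail_vec O = l1_add (P n) (tail_vec n).
Proof.
  apply l1_ext. intros z. simpl. induction n as [|n IH].
  - simpl. ring.
  - rewrite IH, (tail_step n z). simpl. fold (P n) (a n) (lam n). ring.
Qed.

(** Writing x = P_n + a_n e_{λ_n} + tail_{n+1}, the coefficient of the lift
    at y_n is 0 + a_n m_n (up to sign) + a perturbation of size at most
    2 C a_{n+1} ≤ a_n m_n / 2, hence nonzero. *)
Lemma W_tail_yy n : W (tail_vec O) (yy n) <> 0.
Proof.
  rewrite (tail_decomposition (S n)), W_add, P_step, W_add, W_scal, W_P_yy.
  pose proof (W_bound (tail_vec (S n)) (yy n)) as Hrest.
  pose proof (tail_vec_norm (S n)). pose proof (a_small n).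
  pose proof (a_pos n). pose proof (m_pos n).
  assert (Hgain : Rabs (a n * W (unit_vector (lam n)) (yy n)) = a n * m n).
  { rewrite Rabs_mult, Rabs_right by lra. reflexivity. }
  set (w := W (unit_vector (lam n)) (yy n)) in *.
  set (r := W (tail_vec (S n)) (yy n)) in *.
  assert (C * l1_norm (tail_vec (S n)) <= C * (2 * a (S n)))
    by (apply Rmult_le_compat_l; lra).
  assert (C * (2 * a (S n)) <= a n * m n / 2).
  { apply Rle_trans with (C * (2 * (a n * m n / (4 * C)))).
    - apply Rmult_le_compat_l; lra.
    - right. field. lra. }
  assert (0 < a n * m n) by (apply Rmult_lt_0_compat; auto).
  intros Hsum. assert (Hw : a n * w = - r) by lra.
  rewrite Hw, Rabs_Ropp in Hgain. lra.
Qed.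

(** The infinitely many distinct y_n all lie in the finite support of the
    lift of [tail_vec 0]. *)
Lemma no_bounded_lifting : False.
Proof.
  set (S := support (tail_vec O)).
  set (ys := map yy (seq 0 (Datatypes.S (length S)))).
  assert (Hnodup : NoDup ys).
  { apply NoDup_map_NoDup_ForallPairs; [intros i j _ _; apply yy_inj | apply seq_NoDup]. }
  assert (Hincl : incl ys S).
  { intros y Hy. apply in_map_iff in Hy. destruct Hy as [k [<- _]].
    apply support_spec, W_tail_yy. }
  pose proof (NoDup_incl_length Hnodup Hincl) as Hlen.
  unfold ys in Hlen. rewrite length_map, length_seq in Hlen. lia.
Qed.

End NoBoundedLifting.

Lemma extremely_projective_topologically (P : NormedSpace) :
  extremely_projective P -> topologically_projective P.
Proof.
  intros Hext F E tau Htau phi Hlin Hbd.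
  destruct (Hext F E tau Htau phi Hlin Hbd 1 Rlt_0_1) as [psi [Hpsi [Hbpsi [Hlift _]]]].
  exists psi. auto.
Qed.

(** The identity of l_1(Λ) does not lift through the evaluation map of [Free]. *)
Lemma l1_not_topologically_projective (L : Type) :
  infinite_type L -> ~ topologically_projective (l1 L).
Proof.
  intros HL Hproj.
  destruct (Hproj (Free (l1 L)) (l1 L) evaluation (evaluation_coisometric _) (fun x => x))
    as [psi [Hlin [[C0 Hbd] Hlift]]].
  - split; intros; reflexivity.
  - exists 1. intros x. lra.
  - apply (no_bounded_lifting L HL psi Hlin (Rmax C0 1)); auto.
    + pose proof (Rmax_r C0 1). lra.
    + intros x. eapply Rle_trans; [apply Hbd|].
      apply Rmult_le_compat_r; [apply ns_norm_nonneg | apply Rmax_l].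
Qed.

Theorem proposition2p5 (L : Type) (HL : infinite_type L) :
  ~ topologically_projective (l1 L) /\ ~ extremely_projective (l1 L).
Proof.
  split.
  - apply l1_not_topologically_projective; auto.
  - intros Hext. apply (l1_not_topologically_projective L HL).
    apply extremely_projective_topologically; auto.
Qed.
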